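(* Let $M=(E,r)$ be a polymatroid with $|E|\ge2$ and let $a\in E$. Let $\underline k$ and $\overline k$ be the minimum and maximum of $p_a$ over $p\in P(M)$. Then \[ Q'_M(x,y)=(x-1)\,Q'_{M\setminus a}(x,y)+(y-1)\,Q'_{M/a}(x,y)+\sum_{k=\underline k}^{\overline k}Q'_{N_k}(x,y), \] where the sum ranges over all $a$-slices $N_k$, $\underline k\le k\le\overline k$ (including the deletion slice $k=\underline k$ and contraction slice $k=\overline k$, each counted once; if $\underline k=\overline k$ there is a single slice).
   Context: A polymatroid $M=(E,r)$ is a function $r:2^E\to\mathbb Z_{\ge0}$ with $r(\emptyset)=0$, $r$ monotone, and $r(X\cup Y)+r(X\cap Y)\le r(X)+r(Y)$. Its bases are the $\mathbf x\in\mathbb Z^E$ with $\sum_{i\in E}x_i=r(E)$ and $\sum_{i\in S}x_i\le r(S)$ for all $S$; $P(M)$ is their convex hull. For an integer $k$ with $\underline k\le k\le\overline k$, the $a$-slice $N_k$ is the polymatroid on $E\setminus\{a\}$ whose base polytope is the image, under the coordinate projection $\mathbb R^E\to\mathbb R^{E\setminus\{a\}}$, of the convex hull of the bases $p$ of $M$ with $p_a=k$. The deletion $M\setminus a$ is the slice $N_{\underline k}$ and the contraction $M/a$ is the slice $N_{\overline k}$. For a polymatroid $N$ on nonempty $F$ with base polytope $P(N)$, let $\Delta_F=\operatorname{conv}\{\mathbf e_i:i\in F\}$, $\nabla_F=-\Delta_F$, $Q_N(t,u)=\#((P(N)+u\Delta_F+t\nabla_F)\cap\mathbb Z^F)$ for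 integers $t,u\ge0$; this is a polynomial, written $Q_N(t,u)=\sum_{i,j}c_{ij}\binom{u}{j}\binom{t}{i}$, and $Q'_N(x,y)=\sum_{i,j}c_{ij}(x-1)^i(y-1)^j$. *)

From HB Require Import structures.
From mathcomp Require Import all_boot all_order all_algebra.
From Stdlib Require List.
Set Implicit Arguments. Unset Strict Implicit. Unset Printing Implicit Defensive.
Import Order.TTheory GRing.Theory Num.Theory.
Local Open Scope ring_scope.

Definition polymatroid (E : finType) (r : {set E} -> nat) : Prop :=
  r set0 = 0%N /\
  (forall A B : {set E}, A \subset B -> (r A <= r B)%N) /\
  (forall A B : {set E}, (r (A :|: B) + r (A :&: B) <= r A + r B)%N).

Definition isBase (E : finType) (r : {set E} -> nat) (x : E -> int) : Prop :=
  \sum_(i : E) x i = (r setT)%:Z /\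
  (forall S : {set E}, \sum_(i in S) x i <= (r S)%:Z).

Definition conv (T : finType) (B : (T -> int) -> Prop) (y : T -> rat) : Prop :=
  exists s : seq (rat * (T -> int)),
    (forall wp, List.In wp s -> 0 <= wp.1 /\ B wp.2) /\
    \sum_(wp <- s) wp.1 = 1 /\
    (forall i, y i = \sum_(wp <- s) wp.1 * (wp.2 i)%:~R).

Definition basePolytope (E : finType) (r : {set E} -> nat) : (E -> rat) -> Prop :=
  conv (isBase r).

Definition minus_pt (E : finType) (a : E) : finType := {x : E | x != a}.

Definition slicePolytope (E : finType) (r : {set E} -> nat) (a : E) (k : int)
  : (minus_pt a -> rat) -> Prop :=
  fun y => exists z : E -> rat,
    conv (fun p => isBase r p /\ p a = k) z /\
    (forall i : minus_pt a, y i = z (val i)).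

Arguments slicePolytope {E} r a k _.

Definition unitVec (T : finType) (v : T -> int) : Prop :=
  exists i : T, forall j : T, v j = (i == j)%:Z.
Definition Delta (T : finType) : (T -> rat) -> Prop := conv (@unitVec T).

Definition inMinkowski (T : finType) (P : (T -> rat) -> Prop) (t u : nat)
  (x : {ffun T -> int}) : Prop :=
  exists p d e : T -> rat,
    P p /\ Delta d /\ Delta e /\
    (forall i, (x i)%:~R = p i + u%:R * d i + t%:R * (- e i)).

Definition latticeCount (T : finType) (P : (T -> rat) -> Prop) (t u n : nat) : Prop :=
  exists s : seq {ffun T -> int},
    uniq s /\ size s = n /\ (forall x, x \in s <-> inMinkowski P t u x).

(* Bivariate polynomials: {poly {poly int}}; the variable x is the inner
   variable ('X%:P) and y is the outer variable ('X). *)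
Definition Qx1 : {poly {poly int}} := ('X - 1)%:P.
Definition Qy1 : {poly {poly int}} := 'X - 1.

Definition isQprime (T : finType) (P : (T -> rat) -> Prop) (Q : {poly {poly int}})
  : Prop :=
  exists (D : nat) (c : nat -> nat -> int),
    (forall t u : nat, exists n : nat, latticeCount P t u n /\
        n%:Z = \sum_(i < D) \sum_(j < D) c i j * ('C(u, j))%:Z * ('C(t, i))%:Z) /\
    Q = \sum_(i < D) \sum_(j < D) (c i j)%:P%:P * Qx1 ^+ i * Qy1 ^+ j.

From HB Require Import structures.
From mathcomp Require Import all_boot all_order all_algebra.
From mathcomp Require Import zify ring lra.
From Stdlib Require Import IndefiniteDescription.
Set Implicit Arguments. Unset Strict Implicit. Unset Printing Implicit Defensive.
Import Order.TTheory GRing.Theory Num.Theory.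
Local Open Scope ring_scope.

(* For a submodular g, the lattice points of P(g, N) + u Delta + t Nabla are
   the integer x with sum x = N + u - t and sum_S x <= g S + u for every proper
   S: a greedy descent along tight sets writes such an x as a base plus u unit
   vectors minus t unit vectors.
   Sort these points by the coordinate x_a.  For kmin <= x_a <= kmax the fibre
   is the corresponding set of the slice N_(x_a); for x_a = kmin - j it is that
   of N_kmin with t replaced by t - j, and for x_a = kmax + j that of N_kmax
   with u replaced by u - j.  Hence
     Q_M(t, u) = sum_(s < t) Q_Nkmin(s, u) + sum_(s < u) Q_Nkmax(t, s)
                 + sum_k Q_Nk(t, u),
   and summing over s < t turns binom(s, i) into binom(t, i + 1) (hockey
   stick), i.e. multiplies Q' by x - 1.  The same recursion, by induction on
   |E|, shows that all these counts are polynomials of the required form. *)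

Definition submodular (T : finType) (g : {set T} -> int) : Prop :=
  forall A B : {set T}, g (A :|: B) + g (A :&: B) <= g A + g B.

(* The lattice points of P(g, N) + u Delta + t Nabla, where P(g, N) is the base
   polytope of g with the total rank replaced by N <= g setT. *)
Definition dilated (T : finType) (g : {set T} -> int) (N : int) (t u : nat)
    (x : T -> int) : Prop :=
  \sum_i x i = N + u%:Z - t%:Z /\
  forall S : {set T}, S != setT -> \sum_(i in S) x i <= g S + u%:Z.

Lemma sum_delta (T : finType) (P : pred T) (i : T) :
  \sum_(j | P j) ((i == j)%:Z : int) = (P i)%:Z.
Proof.
case Pi: (P i); last by rewrite big1 // => j Pj; case: eqP => // ij; rewrite ij Pj in Pi.
rewrite (bigD1 i) //= eqxx big1 ?addr0 // => j /andP[_ ne].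
by rewrite eq_sym (negbTE ne).
Qed.

Lemma sum_subr_delta (T : finType) (P : pred T) (x : T -> int) (i : T) :
  \sum_(j | P j) (x j - (i == j)%:Z) = \sum_(j | P j) x j - (P i)%:Z.
Proof. by rewrite big_split /= sumrN sum_delta. Qed.

Lemma sum_addr_delta (T : finType) (P : pred T) (x : T -> int) (i : T) :
  \sum_(j | P j) (x j + (i == j)%:Z) = \sum_(j | P j) x j + (P i)%:Z.
Proof. by rewrite big_split /= sum_delta. Qed.

Lemma sum_setT (T : finType) (V : nmodType) (x : T -> V) :
  \sum_(i in [set: T]) x i = \sum_i x i.
Proof. by apply: eq_bigl => i; rewrite in_setT. Qed.

Lemma sum_setUI (T : finType) (x : T -> int) (A B : {set T}) :
  \sum_(i in A :|: B) x i + \sum_(i in A :&: B) x i =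
  \sum_(i in A) x i + \sum_(i in B) x i.
Proof.
rewrite !(big_mkcond (fun i => i \in _)) -!big_split /=; apply: eq_bigr => i _.
by rewrite in_setU in_setI; case: (i \in A); case: (i \in B); rewrite /= ?addr0 ?add0r.
Qed.

Lemma setI_neqT (T : finType) (S S' : {set T}) : S != setT -> S :&: S' != setT.
Proof.
apply: contra => /eqP SS'T; rewrite eqEsubset subsetT -SS'T.
exact: subsetIl.
Qed.

Section Descent.

Variables (T : finType) (i0 : T) (g : {set T} -> int) (N : int).
Hypotheses (g_sub : submodular g) (g0_ge0 : 0 <= g set0) (N_le : N <= g setT).

Definition tight (x : T -> int) (c : int) (S : {set T}) :=
  (S != setT) && (\sum_(i in S) x i == g S + c).

Lemma tight_setI t u x S S' :
  dilated g N t u x -> tight x u%:Z S -> tight x u%:Z S' -> tight x u%:Z (S :&: S').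
Proof.
move=> [sx hx] /andP[nS /eqP eS] /andP[nS' /eqP eS'].
suff e : \sum_(i in S :&: S') x i = g (S :&: S') + u%:Z.
  by rewrite /tight setI_neqT // e eqxx.
have UI := sum_setUI x S S'; have gUI := g_sub S S'; have hI := hx _ (setI_neqT S' nS).
case: (S :|: S' =P setT) => [UT | /eqP nU]; last by have hU := hx _ nU; lia.
by rewrite UT sum_setT sx in UI; rewrite UT in gUI; lia.
Qed.

Lemma tight_setU t x S S' :
  dilated g N t.+1 0 x -> tight x 0 S -> tight x 0 S' -> tight x 0 (S :|: S').
Proof.
move=> [sx hx] /andP[nS /eqP eS] /andP[nS' /eqP eS'].
have UI := sum_setUI x S S'; have gUI := g_sub S S'; have hI := hx _ (setI_neqT S' nS).
case: (S :|: S' =P setT) => [UT | /eqP nU].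
  by rewrite UT sum_setT sx in UI; rewrite UT in gUI; lia.
suff e : \sum_(i in S :|: S') x i = g (S :|: S') + 0 by rewrite /tight nU e eqxx.
by have hU := hx _ nU; lia.
Qed.

Lemma dilated_subr_delta t u x i :
  dilated g N t u.+1 x -> (forall S, tight x u.+1%:Z S -> i \in S) ->
  dilated g N t u (fun j => x j - (i == j)%:Z).
Proof.
move=> [sx hx] hi; split.
  by rewrite sum_subr_delta sx; lia.
move=> S nS; rewrite sum_subr_delta; move: (hx S nS) => /= hS.
case tS: (tight x u.+1%:Z S); first by rewrite (hi _ tS); lia.
have : \sum_(j in S) x j != g S + u.+1%:Z by apply: contraFN tS => e; rewrite /tight nS e.
by case: (i \in S) => /=; lia.
Qed.

Lemma dilated_addr_delta t x i :
  dilated g N t.+1 0 x -> (forall S, tight x 0 S -> i \notin S) ->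
  dilated g N t 0 (fun j => x j + (i == j)%:Z).
Proof.
move=> [sx hx] hi; split; first by rewrite sum_addr_delta sx; lia.
move=> S nS; rewrite sum_addr_delta; move: (hx S nS) => /= hS.
case tS: (tight x 0 S); first by rewrite (negbTE (hi _ tS)); lia.
have : \sum_(j in S) x j != g S + 0 by apply: contraFN tS => e; rewrite /tight nS e.
by case: (i \in S) => /=; lia.
Qed.

(* Tight sets are closed under intersection, so a tight set of minimal size is
   contained in every tight set; it is nonempty since g set0 >= 0. *)
Lemma dilated_decr_u t u x :
  dilated g N t u.+1 x -> exists i, dilated g N t u (fun j => x j - (i == j)%:Z).
Proof.
move=> hx; case: (pickP (tight x u.+1%:Z)) => [S1 tS1 | none]; last first.
  by exists i0; apply: dilated_subr_delta => // S; rewrite none.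
case: (arg_minnP (fun S : {set T} => #|S|) tS1) => S0 tS0 minS0.
have [i iS0] : exists i, i \in S0.
  apply/set0Pn; apply: contraTneq tS0 => ->.
  by rewrite /tight big_set0; apply/nandP; right; apply/negP => /eqP; lia.
exists i; apply: dilated_subr_delta => // S tS.
have tSS0 := tight_setI hx tS tS0.
have /eqP/setIidPr/subsetP : S :&: S0 == S0 by rewrite eqEcard subsetIr minS0.
exact.
Qed.

(* Dually, tight sets are closed under union when u = 0 < t, so a tight set of
   maximal size contains every tight set and misses some point. *)
Lemma dilated_decr_t t x :
  dilated g N t.+1 0 x -> exists i, dilated g N t 0 (fun j => x j + (i == j)%:Z).
Proof.
move=> hx; case: (pickP (tight x 0)) => [S1 tS1 | none]; last first.
  by exists i0; apply: dilated_addr_delta => // S; rewrite none.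
case: (arg_maxnP (fun S : {set T} => #|S|) tS1) => S0 tS0 maxS0.
have [i iS0] : exists i, i \notin S0.
  apply/existsP; rewrite -negb_forall; apply: contraTN tS0 => /forallP allS0.
  by rewrite /tight negb_and; apply/orP; left; rewrite negbK eqEsubset subsetT; apply/subsetP.
exists i; apply: dilated_addr_delta => // S tS.
have /eqP SS0 : S0 == S :|: S0.
  by rewrite eqEcard subsetUr; exact: maxS0 (tight_setU hx tS tS0).
by apply: contra iS0; rewrite SS0 in_setU => ->.
Qed.

Lemma dilated_decomposition u t x : dilated g N t u x ->
  exists2 b, dilated g N 0 0 b &
    exists lu lt : seq T, [/\ size lu = u, size lt = t &
      forall i, x i = b i + (count_mem i lu)%:Z - (count_mem i lt)%:Z].
Proof.
elim: u t x => [|u IHu] t x hx; last first.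
  have [i /IHu [b hb [lu [lt [<- <- e]]]]] := dilated_decr_u hx.
  exists b => //; exists (i :: lu), lt; split => // j.
  by have := e j; rewrite /=; case: (i == j) => /=; lia.
elim: t x hx => [|t IHt] x hx.
  by exists x => //; exists [::], [::]; split => // i /=; lia.
have [i /IHt [b hb [lu [lt [su <- e]]]]] := dilated_decr_t hx.
exists b => //; exists lu, (i :: lt); split => // j.
by have := e j; rewrite /=; case: (i == j) => /=; lia.
Qed.

End Descent.

Definition has_card (T : finType) (P : {ffun T -> int} -> Prop) (n : nat) : Prop :=
  exists s : seq {ffun T -> int}, uniq s /\ size s = n /\ (forall x, x \in s <-> P x).

Lemma eq_has_card (T : finType) (P Q : {ffun T -> int} -> Prop) n :
  (forall x, P x <-> Q x) -> has_card P n -> has_card Q n.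
Proof. by move=> PQ [s [us [sn sP]]]; exists s; split => //; split => // x; rewrite sP. Qed.

Lemma has_card_split (T : finType) (P : {ffun T -> int} -> Prop)
    (Q : pred {ffun T -> int}) n1 n2 :
  has_card (fun x => P x /\ Q x) n1 -> has_card (fun x => P x /\ ~~ Q x) n2 ->
  has_card P (n1 + n2).
Proof.
move=> [s1 [us1 [<- s1P]]] [s2 [us2 [<- s2P]]]; exists (s1 ++ s2).
split; last split; first 1 last.
- by rewrite size_cat.
- move=> x; rewrite mem_cat; split=> [/orP[/s1P | /s2P] [] // | Px].
  by apply/orP; case Qx: (Q x); [left; apply/s1P | right; apply/s2P; rewrite Qx].
rewrite cat_uniq us1 us2 andbT; apply/hasPn => x /s2P [_ nQx].
by apply/negP => /s1P [_ Qx]; rewrite Qx in nQx.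
Qed.

Lemma has_card_interval (T : finType) (P : {ffun T -> int} -> Prop)
    (kappa : {ffun T -> int} -> int) (lo : int) (n : nat) (f : nat -> nat) :
  (forall i, (i < n)%N -> has_card (fun x => P x /\ kappa x = lo + i%:Z) (f i)) ->
  has_card (fun x => P x /\ lo <= kappa x /\ kappa x < lo + n%:Z) (\sum_(i < n) f i).
Proof.
elim: n => [|n IH] hf.
  rewrite big_ord0; exists [::]; split => //; split => // x.
  by split => [// | [_ [lo_le lt_lo]]]; exfalso; lia.
rewrite big_ord_recr /=; apply: (has_card_split (Q := fun x => kappa x < lo + n%:Z)).
  apply: eq_has_card (IH (fun i lt_in => hf i (ltnW lt_in))) => x.
  by split=> [[Px range] | [[Px range] lt_n]]; do ![split] => //; lia.
apply: eq_has_card (hf n (ltnSn n)) => x.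
by split=> [[Px e] | [[Px range] ge_n]]; do ![split] => //; lia.
Qed.

Definition dilated_card (T : finType) (g : {set T} -> int) (N : int) (t u n : nat) :=
  has_card (fun x : {ffun T -> int} => dilated g N t u x) n.

Section Slice.

Variables (E : finType) (a : E).
Local Notation E' := (minus_pt a).

Definition liftS (S : {set E'}) : {set E} := [set val i | i in S].

(* The rank function of the a-slice N_k: P(slice_rank g k, N - k) is the
   projection of the fibre {p in P(g, N) | p_a = k}. *)
Definition slice_rank (g : {set E} -> int) (k : int) (S : {set E'}) : int :=
  Order.min (g (liftS S)) (g (a |: liftS S) - k).

Definition extend (k : int) (y : E' -> int) : {ffun E -> int} :=
  [ffun i => if insub i is Some j then y j else k].

Definition restrict (x : E -> int) : {ffun E' -> int} := [ffun j => x (val j)].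

Lemma card_minus_pt : #|E'| = #|E|.-1.
Proof. by rewrite card_sig cardC1. Qed.

Lemma card_minus_pt_gt0 : (1 < #|E|)%N -> (0 < #|E'|)%N.
Proof. by rewrite card_minus_pt; case: #|E|. Qed.

Lemma extend_val k y (j : E') : extend k y (val j) = y j.
Proof. by rewrite ffunE valK. Qed.

Lemma extend_a k y : extend k y a = k.
Proof. by rewrite ffunE insubF // eqxx. Qed.

Lemma restrict_extend k (y : {ffun E' -> int}) : restrict (extend k y) = y.
Proof. by apply/ffunP => j; rewrite ffunE extend_val. Qed.

Lemma extend_restrict (x : {ffun E -> int}) : extend (x a) (restrict x) = x.
Proof.
apply/ffunP => i; rewrite ffunE; case: insubP => [j _ <- | ]; first by rewrite ffunE.
by rewrite negbK => /eqP ->.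
Qed.

Lemma a_notin_liftS S : a \notin liftS S.
Proof. by apply/imsetP => -[j _ ja]; move: (valP j); rewrite -ja eqxx. Qed.

Lemma mem_liftS S j : (val j \in liftS S) = (j \in S).
Proof. by rewrite mem_imset //; exact: val_inj. Qed.

Lemma sum_liftS (V : nmodType) S (f : E -> V) :
  \sum_(i in liftS S) f i = \sum_(j in S) f (val j).
Proof. by rewrite big_imset // => ? ? _ _; exact: val_inj. Qed.

Lemma liftS_neqT S : liftS S != setT.
Proof. by apply: contraNneq (a_notin_liftS S) => ->; rewrite in_setT. Qed.

Lemma mem_liftST i : (i \in liftS setT) = (i != a).
Proof.
case: (boolP (i == a)) => [/eqP -> | ia]; first exact: negbTE (a_notin_liftS _).
by rewrite -[i]/(val (Sub i ia : E')) mem_liftS in_setT.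
Qed.

Lemma setU1_liftST : a |: liftS setT = setT.
Proof. by apply/setP => i; rewrite in_setU1 mem_liftST in_setT orbN. Qed.

Lemma setU1_liftS_neqT S : S != setT -> a |: liftS S != setT.
Proof.
apply: contraNneq => aST; apply/eqP/setP => j; rewrite in_setT -mem_liftS.
by have := in_setT (val j); rewrite -aST in_setU1 (negbTE (valP j)).
Qed.

Lemma liftS_cases (S : {set E}) :
  let S' := [set j : E' | val j \in S] in
  (S = liftS S') \/ (S = a |: liftS S').
Proof.
have e : liftS [set j : E' | val j \in S] = S :\ a.
  apply/setP => i; rewrite in_setD1; case: (boolP (i == a)) => [/eqP -> | ia] /=.
    exact: negbTE (a_notin_liftS _).
  by rewrite -[i]/(val (Sub i ia : E')) mem_liftS inE.
rewrite /= e; case: (boolP (a \in S)) => aS; [right; exact: esym (setD1K aS) | left].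
by apply/setP => i; rewrite in_setD1; case: eqP => // ->; rewrite (negbTE aS).
Qed.

Lemma sum_setU1_liftST (V : nmodType) (f : E -> V) :
  \sum_i f i = f a + \sum_(i in liftS setT) f i.
Proof. by rewrite -sum_setT -setU1_liftST big_setU1 ?a_notin_liftS. Qed.

Lemma sum_restrictT (x : E -> int) : \sum_i x i = \sum_j restrict x j + x a.
Proof.
rewrite sum_setU1_liftST sum_liftS addrC -sum_setT.
by congr (_ + _); apply: eq_bigr => j _; rewrite ffunE.
Qed.

Lemma sum_restrict (x : E -> int) S :
  \sum_(i in liftS S) x i = \sum_(j in S) restrict x j.
Proof. by rewrite sum_liftS; apply: eq_bigr => j _; rewrite ffunE. Qed.

Lemma sum_restrictU1 (x : E -> int) S :
  \sum_(i in a |: liftS S) x i = \sum_(j in S) restrict x j + x a.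
Proof. by rewrite big_setU1 ?a_notin_liftS //= sum_restrict addrC. Qed.

Lemma dilatedE (g : {set E} -> int) N t u (x : E -> int) :
  dilated g N t u x <->
  [/\ \sum_j restrict x j + x a = N + u%:Z - t%:Z,
      forall S, S != setT -> \sum_(j in S) restrict x j <= g (liftS S) + u%:Z,
      forall S, S != setT ->
        \sum_(j in S) restrict x j + x a <= g (a |: liftS S) + u%:Z &
      \sum_j restrict x j <= g (liftS setT) + u%:Z].
Proof.
split=> [[sx hx] | [sx h h' hT]].
  split; first by rewrite -sum_restrictT.
  - by move=> S _; rewrite -sum_restrict; apply: hx; exact: liftS_neqT.
  - by move=> S nS; rewrite -sum_restrictU1; apply: hx; exact: setU1_liftS_neqT.
  by rewrite -sum_setT -sum_restrict; apply: hx; exact: liftS_neqT.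
split=> [|S nS]; first by rewrite sum_restrictT.
case: (liftS_cases S) => eS; rewrite eS.
  rewrite sum_restrict; case: (boolP ([set j : E' | val j \in S] == setT)) => [/eqP -> | nS'].
    by rewrite sum_setT.
  exact: h.
rewrite sum_restrictU1; apply: h'; apply: contraNneq nS => S'T.
by rewrite eS S'T setU1_liftST.
Qed.

End Slice.

Arguments liftS {E} a S.
Arguments slice_rank {E} a g k S.
Arguments extend {E} a k y.

Lemma has_card_fiber (E : finType) (a : E) (P : {ffun E -> int} -> Prop)
    (Q : {ffun minus_pt a -> int} -> Prop) v m :
  (forall x : {ffun E -> int}, x a = v -> (P x <-> Q (restrict a x))) ->
  has_card Q m -> has_card (fun x => P x /\ x a = v) m.
Proof.
move=> PQ [s [us [<- sQ]]].
exists [seq extend a v y | y : {ffun minus_pt a -> int} <- s]; split; last split.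
- rewrite map_inj_uniq // => y1 y2 e.
  by rewrite -(restrict_extend v y1) e restrict_extend.
- by rewrite size_map.
move=> x; split=> [/mapP [y /sQ Qy ->] | [Px xa]].
  by rewrite extend_a; split => //; apply/PQ; rewrite ?extend_a ?restrict_extend.
by apply/mapP; exists (restrict a x); [apply/sQ/PQ | rewrite -xa extend_restrict].
Qed.

Lemma slice_rank_submodular (E : finType) (a : E) (g : {set E} -> int) k :
  submodular g -> submodular (slice_rank a g k).
Proof.
move=> g_sub A B; rewrite /slice_rank /liftS imsetU imsetI => [|? ? _ _]; last exact: val_inj.
rewrite -!/(liftS a _); set U := liftS a A; set V := liftS a B.
have aU : a \notin U := a_notin_liftS A.
have aV : a \notin V := a_notin_liftS B.
have setI_setU1 (W W' : {set E}) : a \notin W -> W :&: (a |: W') = W :&: W'.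
  by move=> aW; apply/setP => i; rewrite !inE; case: eqP => // ->; rewrite (negbTE aW).
have UaV := setI_setU1 U V aU; have VaU := setI_setU1 V U aV.
have h1 := g_sub U V.
have aUaV : (a |: U) :|: (a |: V) = a |: (U :|: V).
  by apply/setP => i; rewrite !inE; case: (i == a).
have aUIaV : (a |: U) :&: (a |: V) = a |: (U :&: V).
  by apply/setP => i; rewrite !inE; case: (i == a).
have h2 := g_sub (a |: U) (a |: V); rewrite aUaV aUIaV in h2.
have h3 := g_sub U (a |: V); rewrite setUCA UaV in h3.
have h4 := g_sub V (a |: U); rewrite setUCA VaU (setUC V) (setIC V) in h4.
lia.
Qed.

Lemma slice_rank0_ge0 (E : finType) (a : E) (g : {set E} -> int) k :
  0 <= g set0 -> k <= g [set a] -> 0 <= slice_rank a g k set0.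
Proof. by move=> g0_ge0 k_le; rewrite /slice_rank /liftS imset0 setU0; lia. Qed.

Lemma slice_rankT_ge (E : finType) (a : E) (g : {set E} -> int) N k :
  N <= g setT -> N - g (liftS a setT) <= k -> N - k <= slice_rank a g k setT.
Proof. by move=> N_le k_ge; rewrite /slice_rank setU1_liftST; lia. Qed.

Section SliceRank.

Variables (E : finType) (a : E) (g : {set E} -> int) (N : int).
Hypotheses (g_sub : submodular g) (g0_ge0 : 0 <= g set0) (N_le : N <= g setT).

(* The extreme values of p_a on P(g, N). *)
Local Notation kmin := (N - g (liftS a setT)).
Local Notation kmax := (g [set a]).

Lemma rank_setU1_liftS_ge S : g (liftS a S) + kmin <= g (a |: liftS a S).
Proof.
have := g_sub (a |: liftS a S) (liftS a setT).
have -> : (a |: liftS a S) :|: liftS a setT = setT.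
  by apply/setP => i; rewrite !inE mem_liftST; case: eqP; rewrite ?orbT.
have -> : (a |: liftS a S) :&: liftS a setT = liftS a S.
  apply/setP => i; rewrite !inE mem_liftST; case: eqP => [-> | _] /=.
    by rewrite (negbTE (a_notin_liftS S)).
  by rewrite andbT.
lia.
Qed.

Lemma rank_setU1_liftS_le S : g (a |: liftS a S) <= kmax + g (liftS a S).
Proof.
have := g_sub [set a] (liftS a S).
have -> : [set a] :&: liftS a S = set0.
  apply/setP => i; rewrite !inE; case: eqP => [-> | //].
  by rewrite (negbTE (a_notin_liftS S)).
lia.
Qed.

Lemma kmin_le_kmax : kmin <= kmax.
Proof. by have := rank_setU1_liftS_le setT; rewrite setU1_liftST; lia. Qed.

Lemma dilated_fiber_mid t u (x : E -> int) :
  kmin <= x a ->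
  dilated g N t u x <-> dilated (slice_rank a g (x a)) (N - x a) t u (restrict a x).
Proof.
move=> kmin_le; rewrite (dilatedE a) /dilated /slice_rank.
split=> [[sx h h' hT] | [sx h]].
  by split=> [|S nS]; [lia | have := h S nS; have := h' S nS; lia].
by split=> [|S nS|S nS|]; [lia | have := h S nS; lia | have := h S nS; lia | lia].
Qed.

Lemma dilated_fiber_low t u (x : E -> int) i :
  (i <= t)%N -> x a = kmin - (t - i)%:Z ->
  dilated g N t u x <-> dilated (slice_rank a g kmin) (N - kmin) i u (restrict a x).
Proof.
move=> le_it xa; have ge := rank_setU1_liftS_ge; rewrite (dilatedE a) /dilated /slice_rank.
split=> [[sx h h' hT] | [sx h]].
  split=> [|S nS]; first lia.
  by have := h S nS; have := h' S nS; have := ge S; lia.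
by split=> [|S nS|S nS|]; [lia | have := h S nS; lia | have := h S nS; lia | lia].
Qed.

Lemma dilated_fiber_high t u (x : E -> int) j :
  (j <= u)%N -> x a = kmax + (u - j)%:Z ->
  dilated g N t u x <-> dilated (slice_rank a g kmax) (N - kmax) t j (restrict a x).
Proof.
move=> le_ju xa; have le := rank_setU1_liftS_le; have kk := kmin_le_kmax.
rewrite (dilatedE a) /dilated /slice_rank.
split=> [[sx h h' hT] | [sx h]].
  split=> [|S nS]; first lia.
  by have := h S nS; have := h' S nS; have := le S; lia.
split=> [|S nS|S nS|]; first lia.
- by have := h S nS; have := le S; lia.
- by have := h S nS; have := le S; lia.
lia.
Qed.

Lemma dilated_range t u (x : E -> int) :
  (1 < #|E|)%N -> dilated g N t u x -> kmin - t%:Z <= x a <= kmax + u%:Z.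
Proof.
move=> E_gt1 hx; have [_ hS] := hx; move/(dilatedE a): hx => [sx _ _ hT].
have /hS : [set a] != setT.
  by apply: contraTneq E_gt1 => aT; rewrite -cardsT -aT cards1.
rewrite big_set1; lia.
Qed.

Lemma dilated_card_slices (C : int -> nat -> nat -> nat) :
  (1 < #|E|)%N ->
  (forall k, kmin <= k <= kmax -> forall t u,
     dilated_card (slice_rank a g k) (N - k) t u (C k t u)) ->
  forall t u, dilated_card g N t u
    (\sum_(i < t) C kmin i u + \sum_(j < u) C kmax t j
     + \sum_(l < `|kmax - kmin|.+1) C (kmin + l%:Z)%R t u).
Proof.
move=> E_gt1 hC t u; have kk := kmin_le_kmax; set L := `|kmax - kmin|%N.
have low : has_card (fun x : {ffun E -> int} => dilated g N t u x /\
    kmin - t%:Z <= x a /\ x a < kmin - t%:Z + t%:Z) (\sum_(i < t) C kmin i u).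
  apply: (has_card_interval (kappa := fun x => x a) (f := fun i => C kmin i u)).
  move=> i lt_it.
  apply: has_card_fiber (hC kmin _ i u) => [x xa|]; last by rewrite lexx kk.
  by apply: dilated_fiber_low; [exact: ltnW | lia].
have mid : has_card (fun x : {ffun E -> int} => dilated g N t u x /\
    kmin <= x a /\ x a < kmin + L.+1%:Z) (\sum_(l < L.+1) C (kmin + l%:Z)%R t u).
  apply: (has_card_interval (kappa := fun x => x a) (f := fun l => C (kmin + l%:Z)%R t u)).
  move=> l lt_lL.
  apply: has_card_fiber (hC (kmin + l%:Z) _ t u) => [x xa|]; last by lia.
  by have := dilated_fiber_mid t u (x := x); rewrite xa; apply; lia.
have high : has_card (fun x : {ffun E -> int} => dilated g N t u x /\
    kmax + 1 <= x a /\ x a < kmax + 1 + u%:Z) (\sum_(i < u) C kmax t (u - i.+1)).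
  apply: (has_card_interval (kappa := fun x => x a) (f := fun i => C kmax t (u - i.+1)%N)).
  move=> i lt_iu.
  apply: has_card_fiber (hC kmax _ t (u - i.+1)%N) => [x xa|]; last by rewrite lexx kk.
  by apply: dilated_fiber_high; [exact: leq_subr | lia].
rewrite [X in (_ + X + _)%N](reindex_inj rev_ord_inj) /= addnAC.
apply: (has_card_split (Q := fun x : {ffun E -> int} => x a <= kmax)).
  apply: (has_card_split (Q := fun x : {ffun E -> int} => x a < kmin)).
    apply: eq_has_card low => x; have rng := @dilated_range t u x E_gt1.
    split=> [[Px r] | [[Px le] lt]]; have r' := rng Px.
      by split; first split => //; lia.
    by split => //; lia.
  apply: eq_has_card mid => x; have rng := @dilated_range t u x E_gt1.
  split=> [[Px r] | [[Px le] lt]]; have r' := rng Px.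
    by split; first split => //; lia.
  by split => //; lia.
apply: eq_has_card high => x; have rng := @dilated_range t u x E_gt1.
by split=> [[Px r] | [Px lt]]; have r' := rng Px; split => //; lia.
Qed.

End SliceRank.

Definition binom_sum (D : nat) (c : nat -> nat -> int) (t u : nat) : int :=
  \sum_(i < D) \sum_(j < D) c i j * ('C(u, j))%:Z * ('C(t, i))%:Z.

Definition shifted_poly (D : nat) (c : nat -> nat -> int) : {poly {poly int}} :=
  \sum_(i < D) \sum_(j < D) (c i j)%:P%:P * Qx1 ^+ i * Qy1 ^+ j.

Definition qprime (f : nat -> nat -> nat) (Q : {poly {poly int}}) : Prop :=
  exists D c, (forall t u, (f t u)%:Z = binom_sum D c t u) /\ Q = shifted_poly D c.

Definition pad (D : nat) (c : nat -> nat -> int) (i j : nat) : int :=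
  if (i < D)%N && (j < D)%N then c i j else 0.

Lemma sum2_pad (V : nmodType) (D D' : nat) (G : nat -> nat -> V) : (D <= D')%N ->
  \sum_(i < D') \sum_(j < D') (if (i < D)%N && (j < D)%N then G i j else 0) =
  \sum_(i < D) \sum_(j < D) G i j.
Proof.
move=> le_DD'; rewrite (big_ord_widen D' (fun i => \sum_(j < D) G i j)) //.
rewrite [RHS]big_mkcond; apply: eq_bigr => i _; case: (i < D)%N => /=; last by rewrite big1.
by rewrite (big_ord_widen D' (G i)) // [RHS]big_mkcond.
Qed.

Lemma binom_sum_pad D D' c t u :
  (D <= D')%N -> binom_sum D' (pad D c) t u = binom_sum D c t u.
Proof.
move=> le_DD'.
rewrite /binom_sum -(sum2_pad (fun i j => c i j * ('C(u, j))%:Z * ('C(t, i))%:Z) le_DD').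
by do 2![apply: eq_bigr => ? _]; rewrite /pad; case: ifP; rewrite ?mul0r.
Qed.

Lemma shifted_poly_pad D D' c :
  (D <= D')%N -> shifted_poly D' (pad D c) = shifted_poly D c.
Proof.
move=> le_DD'.
rewrite /shifted_poly -(sum2_pad (fun i j => (c i j)%:P%:P * Qx1 ^+ i * Qy1 ^+ j) le_DD').
by do 2![apply: eq_bigr => ? _]; rewrite /pad; case: ifP; rewrite ?mul0r.
Qed.

Lemma qprime_ext f f' Q : f =2 f' -> qprime f Q -> qprime f' Q.
Proof. by move=> ff' [D [c [fc ->]]]; exists D, c; split => // t u; rewrite -ff'. Qed.

Lemma qprime_const1 : qprime (fun _ _ => 1%N) 1.
Proof.
exists 1%N, (fun _ _ => 1); split => [t u|]; first by rewrite /binom_sum !big_ord1 !bin0.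
by rewrite /shifted_poly !big_ord1 !expr0 !mulr1.
Qed.

Lemma qprime_add f f' Q Q' :
  qprime f Q -> qprime f' Q' -> qprime (fun t u => f t u + f' t u)%N (Q + Q').
Proof.
move=> [D [c [fc ->]]] [D' [c' [fc' ->]]].
have [le1 le2] := (leq_maxl D D', leq_maxr D D').
exists (maxn D D'), (fun i j => pad D c i j + pad D' c' i j); split => [t u|].
  rewrite PoszD fc fc' -(binom_sum_pad c t u le1) -(binom_sum_pad c' t u le2).
  rewrite /binom_sum -big_split; apply: eq_bigr => i _; rewrite -big_split.
  by apply: eq_bigr => j _; rewrite /= !mulrDl.
rewrite -(shifted_poly_pad c le1) -(shifted_poly_pad c' le2) /shifted_poly -big_split.
apply: eq_bigr => i _; rewrite -big_split; apply: eq_bigr => j _.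
by rewrite /= !polyCD !mulrDl.
Qed.

Lemma qprime_sum n (fs : nat -> nat -> nat -> nat) (Qs : nat -> {poly {poly int}}) :
  (forall i, (i < n)%N -> qprime (fs i) (Qs i)) ->
  qprime (fun t u => \sum_(i < n) fs i t u)%N (\sum_(i < n) Qs i).
Proof.
elim: n => [|n IH] hQs.
  rewrite big_ord0; exists 0%N, (fun _ _ => 0); split => [t u|].
    by rewrite big_ord0 /binom_sum big_ord0.
  by rewrite /shifted_poly big_ord0.
rewrite big_ord_recr /=; apply: qprime_ext; last first.
  by apply: qprime_add (IH (fun i lt_in => hQs i (ltnW lt_in))) (hQs n (ltnSn n)).
by move=> t u; rewrite big_ord_recr.
Qed.

Lemma sum_binom_lt (t i : nat) : (\sum_(s < t) 'C(s, i))%N = 'C(t, i.+1).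
Proof. by elim: t => [|t IH]; rewrite ?big_ord0 // big_ord_recr /= IH binS addnC. Qed.

Lemma Posz_sum (I : Type) (r : seq I) (F : I -> nat) :
  (\sum_(i <- r) F i)%N%:Z = \sum_(i <- r) (F i)%:Z.
Proof. exact: (big_morph Posz PoszD). Qed.

Lemma sum2_shiftl (V : nmodType) D c (H : int -> nat -> nat -> V) :
  (forall i j, H 0 i j = 0) ->
  \sum_(i < D.+1) \sum_(j < D.+1)
     H (if nat_of_ord i is i'.+1 then pad D c i' j else 0) i j =
  \sum_(i < D) \sum_(j < D) H (c i j) i.+1 j.
Proof.
move=> H0; rewrite big_ord_recl big1 ?add0r => [|j _]; last exact: H0.
apply: eq_bigr => i _; rewrite lift0 /= big_ord_recr /= /pad ltnn andbF H0 addr0.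
by apply: eq_bigr => j _; rewrite /= !ltn_ord.
Qed.

Lemma sum2_shiftr (V : nmodType) D c (H : int -> nat -> nat -> V) :
  (forall i j, H 0 i j = 0) ->
  \sum_(i < D.+1) \sum_(j < D.+1)
     H (if nat_of_ord j is j'.+1 then pad D c i j' else 0) i j =
  \sum_(i < D) \sum_(j < D) H (c i j) i j.+1.
Proof.
move=> H0; rewrite big_ord_recr /= [X in _ + X]big1 ?addr0 => [|j _]; last first.
  by case: (nat_of_ord j) => [|j']; rewrite /= ?H0 // /pad ltnn H0.
apply: eq_bigr => i _; rewrite big_ord_recl /= H0 add0r.
by apply: eq_bigr => j _; rewrite /= /pad !ltn_ord.
Qed.

Lemma qprime_shiftl f Q : qprime f Q -> qprime (fun t u => \sum_(s < t) f s u)%N (Qx1 * Q).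
Proof.
move=> [D [c [fc ->]]].
exists D.+1, (fun i j => if i is i'.+1 then pad D c i' j else 0); split => [t u|].
  rewrite /binom_sum (@sum2_shiftl _ D c (fun v i j => v * ('C(u, j))%:Z * ('C(t, i))%:Z));
    last by move=> *; rewrite !mul0r.
  rewrite /= Posz_sum /=; under eq_bigr => s _ do rewrite fc.
  rewrite /binom_sum exchange_big; apply: eq_bigr => i _; rewrite exchange_big.
  by apply: eq_bigr => j _; rewrite -mulr_sumr -Posz_sum sum_binom_lt.
rewrite /shifted_poly (@sum2_shiftl _ D c (fun v i j => v%:P%:P * Qx1 ^+ i * Qy1 ^+ j));
  last by move=> *; rewrite !mul0r.
rewrite mulr_sumr; apply: eq_bigr => i _; rewrite mulr_sumr; apply: eq_bigr => j _.
by rewrite exprS; ring.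
Qed.

Lemma qprime_shiftr f Q : qprime f Q -> qprime (fun t u => \sum_(s < u) f t s)%N (Qy1 * Q).
Proof.
move=> [D [c [fc ->]]].
exists D.+1, (fun i j => if j is j'.+1 then pad D c i j' else 0); split => [t u|].
  rewrite /binom_sum (@sum2_shiftr _ D c (fun v i j => v * ('C(u, j))%:Z * ('C(t, i))%:Z));
    last by move=> *; rewrite !mul0r.
  rewrite /= Posz_sum /=; under eq_bigr => s _ do rewrite fc.
  rewrite /binom_sum exchange_big; apply: eq_bigr => i _; rewrite exchange_big.
  apply: eq_bigr => j _; rewrite -mulr_suml -mulr_sumr -Posz_sum sum_binom_lt; ring.
rewrite /shifted_poly (@sum2_shiftr _ D c (fun v i j => v%:P%:P * Qx1 ^+ i * Qy1 ^+ j));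
  last by move=> *; rewrite !mul0r.
rewrite mulr_sumr; apply: eq_bigr => i _; rewrite mulr_sumr; apply: eq_bigr => j _.
by rewrite exprS; ring.
Qed.

Section Recursion.

Variables (E : finType) (a : E) (g : {set E} -> int) (N : int).
Hypotheses (g_sub : submodular g) (g0_ge0 : 0 <= g set0) (N_le : N <= g setT).

Local Notation kmin := (N - g (liftS a setT)).
Local Notation kmax := (g [set a]).

Lemma qprime_slices (f : int -> nat -> nat -> nat) (Q : int -> {poly {poly int}}) :
  (1 < #|E|)%N ->
  (forall k, kmin <= k <= kmax -> qprime (f k) (Q k) /\
     forall t u, dilated_card (slice_rank a g k) (N - k) t u (f k t u)) ->
  exists F, qprime F (Qx1 * Q kmin + Qy1 * Q kmax
                     + \sum_(l < `|kmax - kmin|.+1) Q (kmin + l%:Z)) /\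
            forall t u, dilated_card g N t u (F t u).
Proof.
move=> E_gt1 hfQ; have kk := kmin_le_kmax a g_sub g0_ge0 N_le.
eexists; split; last first.
  by apply: dilated_card_slices => // k /hfQ [].
apply: qprime_add; first apply: qprime_add.
- by apply: qprime_shiftl; apply: (proj1 (hfQ _ _)); rewrite lexx.
- by apply: qprime_shiftr; apply: (proj1 (hfQ _ _)); rewrite lexx kk.
apply: (qprime_sum (fs := fun l => f (kmin + l%:Z)) (Qs := fun l => Q (kmin + l%:Z))).
move=> l lt_l; apply: (proj1 (hfQ _ _)); lia.
Qed.

Lemma choose_slices :
  (forall g' N', submodular g' -> 0 <= g' set0 -> N' <= g' setT ->
     exists f Q, qprime f Q /\
       forall t u, dilated_card (T := minus_pt a) g' N' t u (f t u)) ->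
  exists (f : int -> nat -> nat -> nat) (Q : int -> {poly {poly int}}),
    forall k, kmin <= k <= kmax -> qprime (f k) (Q k) /\
      forall t u, dilated_card (slice_rank a g k) (N - k) t u (f k t u).
Proof.
move=> slice_qprime.
pose R k (fQ : (nat -> nat -> nat) * {poly {poly int}}) := kmin <= k <= kmax ->
  qprime fQ.1 fQ.2 /\ forall t u, dilated_card (slice_rank a g k) (N - k) t u (fQ.1 t u).
have [fQ hfQ] : exists fQ, forall k, R k (fQ k).
  apply: functional_choice => k.
  case: (boolP (kmin <= k <= kmax)) => [/andP[k_ge k_le] | out]; last first.
    by exists ((fun _ _ => 0%N), 0) => kin; case/negP: out.
  have [f [Q fQ]] := slice_qprime _ _ (slice_rank_submodular (a := a) k g_sub)
    (slice_rank0_ge0 (a := a) g0_ge0 k_le) (slice_rankT_ge (a := a) N_le k_ge).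
  by exists (f, Q).
by exists (fun k => (fQ k).1), (fun k => (fQ k).2).
Qed.

End Recursion.

Lemma dilated_card_singleton (E : finType) (g : {set E} -> int) N t u :
  #|E| = 1%N -> 0 <= g set0 -> dilated_card g N t u 1.
Proof.
move=> E1 g0_ge0; have [i0 _] : exists i0 : E, i0 \in E by apply/card_gt0P; rewrite E1.
have /card_le1_eqP eqE : (#|E| <= 1)%N by rewrite E1.
have all_i0 (j : E) : j = i0 by exact: eqE.
have sumE (x : E -> int) : \sum_i x i = x i0.
  by rewrite (big_pred1 i0) // => j; rewrite [j]all_i0 !inE eqxx.
have S0 (S : {set E}) : S != setT -> S = set0.
  move=> nS; apply/setP => j; rewrite in_set0; apply: contraNF nS => jS.
  by apply/eqP/setP => k; rewrite in_setT [k]all_i0 -[i0](all_i0 j).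
exists [:: [ffun _ => N + u%:Z - t%:Z]]; split => //; split => // x.
rewrite mem_seq1; split=> [/eqP -> | [sx _]].
  split=> [|S /S0 ->]; first by rewrite sumE ffunE.
  by rewrite big_set0; lia.
by apply/eqP/ffunP => j; rewrite ffunE [j]all_i0 -sx sumE.
Qed.

Lemma dilated_card_qprime (E : finType) (g : {set E} -> int) N :
  (0 < #|E|)%N -> submodular g -> 0 <= g set0 -> N <= g setT ->
  exists f Q, qprime f Q /\ forall t u, dilated_card g N t u (f t u).
Proof.
move cardE : #|E| => n; elim: n => [|n IH] in E g N cardE * => //.
move=> _ g_sub g0_ge0 N_le.
case: n IH cardE => [|n] IH cardE.
  exists (fun _ _ => 1%N), 1; split; first exact: qprime_const1.
  by move=> t u; exact: dilated_card_singleton.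
have [a _] : exists a : E, a \in E by apply/card_gt0P; rewrite cardE.
have cardE' : #|minus_pt a| = n.+1 by rewrite card_minus_pt cardE.
have [f [Q hfQ]] := choose_slices g_sub g0_ge0 N_le
  (fun g' N' => IH (minus_pt a) g' N' cardE' isT).
have E_gt1 : (1 < #|E|)%N by rewrite cardE.
have [F [FQ hF]] := qprime_slices g_sub g0_ge0 N_le E_gt1 hfQ.
by exists F; eexists; split; [exact: FQ | exact: hF].
Qed.

Lemma wsum_le (X : Type) (s : seq (rat * X)) (L R : X -> rat) :
  (forall wp, List.In wp s -> 0 <= wp.1 /\ L wp.2 <= R wp.2) ->
  \sum_(wp <- s) wp.1 * L wp.2 <= \sum_(wp <- s) wp.1 * R wp.2.
Proof.
elim: s => [|wp s IH] hs; first by rewrite !big_nil.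
rewrite !big_cons; have [w_ge0 LR] := hs wp (or_introl erefl).
by rewrite lerD ?ler_wpM2l // IH // => w ws; apply: hs; right.
Qed.

Section ConvexHull.

Variables (T : finType) (B : (T -> int) -> Prop) (y : T -> rat) (P : pred T) (c : int).
Hypothesis y_conv : conv B y.

Let intr_sum (v : T -> int) :
  \sum_(i | P i) ((v i)%:~R : rat) = (\sum_(i | P i) v i)%:~R.
Proof. by rewrite mulrz_sumr. Qed.

Let conv_sumE : exists2 s : seq (rat * (T -> int)),
    (forall wp, List.In wp s -> 0 <= wp.1 /\ B wp.2) /\ \sum_(wp <- s) wp.1 = 1 &
    \sum_(i | P i) y i = \sum_(wp <- s) wp.1 * (\sum_(i | P i) wp.2 i)%:~R.
Proof.
have [s [sB [s1 ys]]] := y_conv; exists s => //.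
under eq_bigr do rewrite ys.
by rewrite exchange_big; apply: eq_bigr => wp _; rewrite -mulr_sumr intr_sum.
Qed.

Lemma conv_sum_le :
  (forall v, B v -> \sum_(i | P i) v i <= c) -> \sum_(i | P i) y i <= c%:~R.
Proof.
have [s [sB s1] ->] := conv_sumE => le_c.
rewrite (_ : c%:~R = \sum_(wp <- s) wp.1 * c%:~R); last by rewrite -mulr_suml s1 mul1r.
apply: (wsum_le (L := fun v => (\sum_(i | P i) v i)%:~R) (R := fun=> c%:~R)).
by move=> wp /sB [w_ge0 /le_c]; rewrite ler_int.
Qed.

Lemma conv_sum_ge :
  (forall v, B v -> c <= \sum_(i | P i) v i) -> c%:~R <= \sum_(i | P i) y i.
Proof.
have [s [sB s1] ->] := conv_sumE => ge_c.
rewrite (_ : c%:~R = \sum_(wp <- s) wp.1 * c%:~R); last by rewrite -mulr_suml s1 mul1r.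
apply: (wsum_le (L := fun=> c%:~R) (R := fun v => (\sum_(i | P i) v i)%:~R)).
by move=> wp /sB [w_ge0 /ge_c]; rewrite ler_int.
Qed.

Lemma conv_sum_eq :
  (forall v, B v -> \sum_(i | P i) v i = c) -> \sum_(i | P i) y i = c%:~R.
Proof.
move=> eq_c; apply/eqP; rewrite eq_le conv_sum_le ?conv_sum_ge // => v /eq_c ->//.
Qed.

End ConvexHull.

Lemma conv_vertex (T : finType) (B : (T -> int) -> Prop) (b : T -> int) :
  B b -> conv B (fun i => (b i)%:~R).
Proof.
move=> Bb; exists [:: (1, b)]; split; first by move=> wp [<- | []].
by split=> [|i]; rewrite big_seq1 ?mul1r.
Qed.

Lemma unitVec_sum (T : finType) (v : T -> int) (P : pred T) :
  unitVec v -> 0 <= \sum_(j | P j) v j <= 1.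
Proof. by move=> [i vi]; under eq_bigr do rewrite vi; rewrite sum_delta; case: (P i). Qed.

Lemma unitVec_sumT (T : finType) (v : T -> int) : unitVec v -> \sum_j v j = 1.
Proof. by move=> [i vi]; under eq_bigr do rewrite vi; rewrite sum_delta. Qed.

Lemma sum_seq_delta (T : eqType) (r : seq T) (c : rat) (i : T) :
  \sum_(m <- r) c * ((m == i)%:Z)%:~R = c * (count_mem i r)%:R.
Proof.
elim: r => [|m r IH]; first by rewrite big_nil mulr0.
by rewrite big_cons IH /= natrD mulrDr; case: (m == i); rewrite ?mulr1 ?mulr0 ?add0r.
Qed.

(* The barycentre of the unit vectors listed in l (any point of Delta if l = [::]). *)
Lemma Delta_count_mem (T : finType) (i0 : T) (l : seq T) :
  exists2 d, Delta d & forall i, (size l)%:R * d i = (count_mem i l)%:R.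
Proof.
case: l => [|j l].
  exists (fun i => ((i0 == i)%:Z)%:~R) => [|i]; last by rewrite mul0r.
  by apply: (conv_vertex (b := fun i => (i0 == i)%:Z)); exists i0.
set l' := j :: l; have l'_neq0 : (size l')%:R != 0 :> rat by rewrite pnatr_eq0.
pose s := [seq ((size l')%:R^-1 : rat, fun k => (m == k)%:Z) | m <- l'].
have sum_s (i : T) :
    \sum_(wp <- s) wp.1 * (wp.2 i)%:~R = (size l')%:R^-1 * (count_mem i l')%:R.
  by rewrite big_map sum_seq_delta.
exists (fun i => \sum_(wp <- s) wp.1 * (wp.2 i)%:~R); last first.
  by move=> i; rewrite sum_s mulVKf.
exists s; split.
  move=> wp /(List.in_map_iff _ l' wp) [m [<- _]].
  by split; [rewrite invr_ge0 | exists m].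
split=> [|//]; rewrite big_map big_const_seq count_predT iter_addr_0 /=.
by rewrite -[X in X *+ _]mulr1 -mulrnAr mulVf.
Qed.

Section Minkowski.

Variables (T : finType) (i0 : T) (g : {set T} -> int) (N : int).
Variable (Pol : (T -> rat) -> Prop).
Hypotheses (g_sub : submodular g) (g0_ge0 : 0 <= g set0) (N_le : N <= g setT).
Hypothesis Pol_le : forall y, Pol y -> \sum_i y i = N%:~R /\
  forall S : {set T}, S != setT -> \sum_(i in S) y i <= (g S)%:~R.
Hypothesis Pol_ge : forall b, dilated g N 0 0 b -> Pol (fun i => (b i)%:~R).

Lemma inMinkowskiE t u x : inMinkowski Pol t u x <-> dilated g N t u x.
Proof.
split=> [[p [d [e [Pp [Dd [De xE]]]]]] | /(dilated_decomposition i0 g_sub g0_ge0 N_le)].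
  have [sp Sp] := Pol_le Pp.
  have sum_x (P : pred T) : ((\sum_(i | P i) x i)%:~R : rat) =
      \sum_(i | P i) p i + u%:R * \sum_(i | P i) d i - t%:R * \sum_(i | P i) e i.
    rewrite mulrz_sumr; under eq_bigr do rewrite xE.
    by rewrite !big_split /= -!mulr_sumr sumrN mulrN.
  have dT : \sum_i d i = 1%:~R by apply: conv_sum_eq Dd _ => v /unitVec_sumT.
  have eT : \sum_i e i = 1%:~R by apply: conv_sum_eq De _ => v /unitVec_sumT.
  split=> [|S nS].
    apply/eqP; rewrite -(eqr_int rat) sum_x sp dT eT !mulr1 intrB intrD.
    by rewrite !pmulrn.
  have dS : \sum_(i in S) d i <= 1%:~R.
    by apply: conv_sum_le Dd _ => v /(unitVec_sum (mem S)) /andP[].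
  have eS : 0%:~R <= \sum_(i in S) e i.
    by apply: conv_sum_ge De _ => v /(unitVec_sum (mem S)) /andP[].
  have := Sp S nS; rewrite -(ler_int rat) sum_x intrD => pS.
  have ud : u%:R * \sum_(i in S) d i <= u%:R :> rat.
    by rewrite -[X in _ <= X]mulr1; apply: ler_wpM2l.
  have te : 0 <= t%:R * \sum_(i in S) e i :> rat by apply: mulr_ge0.
  rewrite pmulrn; lra.
move=> [b bB [lu [lt [<- <- xE]]]].
have [d Dd ud] := Delta_count_mem i0 lu; have [e De te] := Delta_count_mem i0 lt.
exists (fun i => (b i)%:~R), d, e; split; first exact: Pol_ge.
do 2!split => //; move=> i.
by rewrite xE ud mulrN te intrB intrD !pmulrn.
Qed.

Lemma isQprime_of_qprime f Q :
  qprime f Q -> (forall t u, dilated_card g N t u (f t u)) -> isQprime Pol Q.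
Proof.
move=> [D [c [fc ->]]] hf; exists D, c; split => // t u; exists (f t u).
split; last by rewrite fc.
by apply: eq_has_card (hf t u) => x; rewrite inMinkowskiE.
Qed.

End Minkowski.

(* For M and t large the constant point -M lies in P(g, N) + t Nabla; descend. *)
Lemma dilated_base_exists (T : finType) (i0 : T) (g : {set T} -> int) N :
  submodular g -> 0 <= g set0 -> N <= g setT -> exists b, dilated g N 0 0 b.
Proof.
move=> g_sub g0_ge0 N_le.
pose M := (`|N| + \sum_(S : {set T}) `|g S|)%N.
have M_ge S : (`|g S| <= M)%N.
  by rewrite /M (bigD1 S) //= addnCA leq_addr.
have T_gt0 : (0 < #|T|)%N by apply/card_gt0P; exists i0.
pose t := absz (N + (M * #|T|)%N%:Z).
have : dilated g N t 0 (fun _ => - M%:Z).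
  split=> [|S nS]; rewrite sumr_const -mulr_natr.
    by rewrite (_ : #|(xpredT : pred T)| = #|T|) /t; [nia | apply: eq_card].
  have := M_ge S; case: (posnP #|S|) => [/eqP S0 | S_gt0]; last by nia.
  by rewrite (eqP S0); move: S0; rewrite cards_eq0 => /eqP ->; lia.
by move=> /(dilated_decomposition i0 g_sub g0_ge0 N_le) [b bB _]; exists b.
Qed.

Section Polymatroid.

Variables (E : finType) (r : {set E} -> nat) (a : E).
Hypothesis r_poly : polymatroid r.

Definition zrank (S : {set E}) : int := (r S)%:Z.

Local Notation N := (r setT)%:Z.
Local Notation kmin := (N - zrank (liftS a setT)).
Local Notation kmax := (zrank [set a]).

Lemma zrank_submodular : submodular zrank.
Proof. by case: r_poly => _ [_ r_sub] A B; rewrite /zrank; have := r_sub A B; lia. Qed.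

Let zrank0_ge0 : 0 <= zrank set0 := isT.
Let zrankT : N <= zrank setT := lexx _.
Let kmin_le_kmax : kmin <= kmax := kmin_le_kmax a zrank_submodular zrank0_ge0 zrankT.

Lemma basePolytope_le y : basePolytope r y ->
  \sum_i y i = N%:~R /\ forall S, S != setT -> \sum_(i in S) y i <= (zrank S)%:~R.
Proof.
move=> y_base; split; first by apply: conv_sum_eq y_base _ => v [].
by move=> S _; apply: conv_sum_le y_base _ => v [_]; apply.
Qed.

Lemma basePolytope_ge b : dilated zrank N 0 0 b -> basePolytope r (fun i => (b i)%:~R).
Proof.
move=> [sb bS]; apply: conv_vertex; split=> [|S]; first by rewrite sb; lia.
case: (S =P setT) => [-> | /eqP nS]; first by rewrite sum_setT sb; lia.
by have := bS S nS; rewrite /zrank; lia.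
Qed.

Lemma slicePolytope_le k y : slicePolytope r a k y ->
  \sum_i y i = (N - k)%:~R /\
  forall S, S != setT -> \sum_(i in S) y i <= (slice_rank a zrank k S)%:~R.
Proof.
move=> [z [z_conv yz]].
have sum_y (S : {set minus_pt a}) : \sum_(i in S) y i = \sum_(i in liftS a S) z i.
  by rewrite sum_liftS; apply: eq_bigr => j _; exact: yz.
split=> [|S _].
  rewrite -sum_setT sum_y; apply: conv_sum_eq z_conv _ => v [[sv _] va].
  by move: sv; rewrite sum_restrict sum_setT (sum_restrictT a) va => <-; rewrite addrK.
rewrite sum_y; apply: conv_sum_le z_conv _ => v [[_ vS] va].
have := vS (liftS a S); have := vS (a |: liftS a S).
by rewrite sum_restrictU1 sum_restrict va /slice_rank /zrank; lia.
Qed.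

Lemma isBase_extend k b : kmin <= k ->
  dilated (slice_rank a zrank k) (N - k) 0 0 b -> isBase r (extend a k b).
Proof.
rewrite /zrank => k_ge [sb bS].
have sum_b S : \sum_(j in S) restrict a (extend a k b) j = \sum_(j in S) b j.
  by apply: eq_bigr => j _; rewrite ffunE extend_val.
split=> [|S]; first by rewrite (sum_restrictT a) extend_a -sum_setT sum_b sum_setT sb; lia.
case: (liftS_cases a S) => ->; set S' := [set j | _].
  rewrite sum_restrict sum_b; case: (boolP (S' == setT)) => [/eqP -> | nS'].
    by rewrite sum_setT sb; lia.
  by have := bS _ nS'; rewrite /slice_rank /zrank; lia.
rewrite sum_restrictU1 sum_b extend_a; case: (boolP (S' == setT)) => [/eqP -> | nS'].
  by rewrite sum_setT sb setU1_liftST; lia.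
by have := bS _ nS'; rewrite /slice_rank /zrank; lia.
Qed.

Lemma slicePolytope_ge k b : kmin <= k ->
  dilated (slice_rank a zrank k) (N - k) 0 0 b ->
  slicePolytope r a k (fun i => (b i)%:~R).
Proof.
move=> k_ge bB; exists (fun i => (extend a k b i)%:~R); split.
  apply: (conv_vertex (B := fun p => isBase r p /\ p a = k)).
  by rewrite extend_a; split => //; exact: isBase_extend.
by move=> i; rewrite extend_val.
Qed.

Lemma kmin_le_basePolytope p : basePolytope r p -> kmin%:~R <= p a.
Proof.
move=> /basePolytope_le [sp /(_ _ (liftS_neqT (a := a) setT)) le_r].
rewrite (sum_setU1_liftST a) in sp; rewrite intrB -sp; lra.
Qed.

Lemma basePolytope_le_kmax p : (1 < #|E|)%N -> basePolytope r p -> p a <= kmax%:~R.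
Proof.
move=> E_gt1 /basePolytope_le [_ /(_ [set a])]; rewrite big_set1; apply.
by apply: contraTneq E_gt1 => aT; rewrite -cardsT -aT cards1.
Qed.

Lemma basePolytope_at k : (1 < #|E|)%N -> kmin <= k <= kmax ->
  exists2 p, basePolytope r p & p a = k%:~R.
Proof.
move=> E_gt1 /andP[k_ge k_le].
have /card_gt0P [i0 _] := card_minus_pt_gt0 a E_gt1.
have [b bB] := dilated_base_exists i0 (slice_rank_submodular (a := a) k zrank_submodular)
  (slice_rank0_ge0 (a := a) zrank0_ge0 k_le) (slice_rankT_ge (a := a) zrankT k_ge).
exists (fun i => (extend a k b i)%:~R); last by rewrite extend_a.
exact/conv_vertex/isBase_extend.
Qed.

Lemma basePolytope_min_eq k : (1 < #|E|)%N ->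
  (exists p, basePolytope r p /\ p a = k%:~R) /\
  (forall p, basePolytope r p -> k%:~R <= p a) -> k = kmin.
Proof.
move=> E_gt1 [[p [p_base pa]] k_le]; apply/eqP; rewrite eq_le.
have /(basePolytope_at E_gt1) [q q_base qa] : kmin <= kmin <= kmax.
  by rewrite lexx kmin_le_kmax.
by rewrite -(ler_int rat) -qa k_le //= -(ler_int rat) -pa kmin_le_basePolytope.
Qed.

Lemma basePolytope_max_eq k : (1 < #|E|)%N ->
  (exists p, basePolytope r p /\ p a = k%:~R) /\
  (forall p, basePolytope r p -> p a <= k%:~R) -> k = kmax.
Proof.
move=> E_gt1 [[p [p_base pa]] le_k]; apply/eqP; rewrite eq_le.
have /(basePolytope_at E_gt1) [q q_base qa] : kmin <= kmax <= kmax.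
  by rewrite lexx kmin_le_kmax.
by rewrite -(ler_int rat) -pa basePolytope_le_kmax //= -(ler_int rat) -qa le_k.
Qed.

Lemma base_isQprime f Q : qprime f Q ->
  (forall t u, dilated_card zrank N t u (f t u)) -> isQprime (basePolytope r) Q.
Proof.
exact: (isQprime_of_qprime a zrank_submodular zrank0_ge0 zrankT
  basePolytope_le basePolytope_ge).
Qed.

Lemma slice_isQprime k f Q : (1 < #|E|)%N -> kmin <= k <= kmax -> qprime f Q ->
  (forall t u, dilated_card (slice_rank a zrank k) (N - k) t u (f t u)) ->
  isQprime (slicePolytope r a k) Q.
Proof.
move=> E_gt1 /andP[k_ge k_le].
have /card_gt0P [i0 _] := card_minus_pt_gt0 a E_gt1.
apply: (isQprime_of_qprime i0 (slice_rank_submodular (a := a) k zrank_submodular)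
  (slice_rank0_ge0 (a := a) zrank0_ge0 k_le) (slice_rankT_ge (a := a) zrankT k_ge)).
  exact: slicePolytope_le.
by move=> b; exact: slicePolytope_ge.
Qed.

End Polymatroid.

Theorem mainTheorem14 (E : finType) (r : {set E} -> nat)
  (hr : polymatroid r) (hE : (2 <= #|E|)%N) (a : E) (kmin kmax : int)
  (hmin : (exists p, basePolytope r p /\ p a = kmin%:~R) /\
          (forall p, basePolytope r p -> kmin%:~R <= p a))
  (hmax : (exists p, basePolytope r p /\ p a = kmax%:~R) /\
          (forall p, basePolytope r p -> p a <= kmax%:~R)) :
  exists (QM Qdel Qcon : {poly {poly int}}) (QN : int -> {poly {poly int}}),
    isQprime (basePolytope r) QM /\
    isQprime (slicePolytope r a kmin) Qdel /\
    isQprime (slicePolytope r a kmax) Qcon /\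
    (forall k : int, kmin <= k <= kmax -> isQprime (slicePolytope r a k) (QN k)) /\
    QM = Qx1 * Qdel + Qy1 * Qcon
         + \sum_(i < (`|kmax - kmin|%N).+1) QN (kmin + i%:Z).
Proof.
have g_sub := zrank_submodular hr.
have g0_ge0 : 0 <= zrank r set0 := isT; have N_le : (r setT)%:Z <= zrank r setT := lexx _.
have kk := kmin_le_kmax a g_sub g0_ge0 N_le.
rewrite (basePolytope_min_eq hr hE hmin) (basePolytope_max_eq hr hE hmax).
have [f [Q hfQ]] := choose_slices (a := a) g_sub g0_ge0 N_le
  (fun g' N' => dilated_card_qprime (card_minus_pt_gt0 a hE)).
have [F [FQ hF]] := qprime_slices g_sub g0_ge0 N_le hE hfQ.
have slice_Q k : _ <= k <= _ -> _ := fun k_in =>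
  slice_isQprime hr hE k_in (proj1 (hfQ k k_in)) (proj2 (hfQ k k_in)).
do 3!eexists; exists Q; split; first exact: base_isQprime FQ hF.
do 2!(split; first by apply: slice_Q; rewrite lexx kk).
by split; first exact: slice_Q.
Qed.
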